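(* Assume $V=L$. Let $\zeta\in\Xi$, $X\in\mathrm{IPS}_\zeta$, let $\eta\in\Xi$ with $\eta\subseteq\zeta$, and let $i\in\zeta\setminus\eta$. Then there exist $x,y\in X$ with $x\restriction\eta=y\restriction\eta$ but $x(i)\neq y(i)$.
   Context: $T$ is the set of all nonempty finite sequences of countable ordinals, partially ordered by strict extension $\subset$. $\Xi$ is the set of all at most countable $\xi\subseteq T$ that are initial segments ($j\subset i\in\xi\Rightarrow j\in\xi$). $D=2^\omega$ is the Cantor space and, for $\xi\in\Xi$, $D^\xi$ is the product of $\xi$ copies of $D$ with the product topology. For $\eta\subseteq\xi$ in $\Xi$ and $x\in D^\xi$, $x\restriction\eta$ is the restriction. For $\zeta\in\Xi$, $\mathrm{IPS}_\zeta$ is the set of all $X\subseteq D^\zeta$ such that there is a homeomorphism $H$ of $D^\zeta$ onto $X$ satisfying, for all $x_0,x_1\in D^\zeta$ and all $\xi\in\Xi$ with $\xi\subseteq\zeta$: $x_0\restriction\xi=x_1\restriction\xi\iff H(x_0)\restriction\xi=H(x_1)\restriction\xi$. *)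

From HB Require Import structures.
From mathcomp Require Import all_boot all_order.
From mathcomp Require Import all_classical all_reals all_analysis.
Set Implicit Arguments. Unset Strict Implicit. Unset Printing Implicit Defensive.
Local Open Scope classical_set_scope.

(** * Countable ordinals
    A countable ordinal is the order type (isomorphism class) of a
    well-order whose field is a subset of nat.  A (reflexive) order R on nat
    has field [n | R n n]. *)
Definition is_wo (R : nat -> nat -> Prop) : Prop :=
  [/\ (forall m n, R m n -> R m m /\ R n n),
      (forall m n, R m n -> R n m -> m = n),
      (forall m n p, R m n -> R n p -> R m p),
      (forall m n, R m m -> R n n -> R m n \/ R n m)
    & well_founded (fun m n => R m n /\ m <> n)].

Definition wo_iso (R S : nat -> nat -> Prop) : Prop :=
  exists f : nat -> nat,
    [/\ (forall m n, R m m -> R n n -> (R m n <-> S (f m) (f n))),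
        (forall m, R m m -> S (f m) (f m))
      & (forall k, S k k -> exists m, R m m /\ f m = k)].

Definition cord : Type :=
  {C : (nat -> nat -> Prop) -> Prop |
     exists R, is_wo R /\ C = (fun S => is_wo S /\ wo_iso R S)}.

(** elements of T: nonempty finite sequences of countable ordinals *)
Definition inT (s : seq cord) : Prop := s <> [::].

Definition sext (j i : seq cord) : Prop := exists k, k <> [::] /\ i = j ++ k.

Definition inXi (xi : set (seq cord)) : Prop :=
  [/\ xi `<=` inT,
      countable xi
    & (forall j i, inT j -> sext j i -> xi i -> xi j)].

(** D = 2^omega = cantor_space; D^xi is the product of xi copies of D *)
Definition Dpow (xi : set (seq cord)) : Type :=
  {ptws {j : seq cord | xi j} -> cantor_space}.

(** x|eta = y|eta, for x, y in D^zeta and eta a subset of zeta *)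
Definition restr_eq {zeta : set (seq cord)} (eta : set (seq cord)) (x y : Dpow zeta) : Prop :=
  forall j : {j : seq cord | zeta j}, eta (sval j) -> x j = y j.

Definition IPS (zeta : set (seq cord)) (X : set (Dpow zeta)) : Prop :=
  exists (H G : Dpow zeta -> Dpow zeta),
    [/\ continuous H,
        H @` setT = X,
        (forall x, G (H x) = x),
        {within X, continuous G}
      & (forall x0 x1 xi, inXi xi -> xi `<=` zeta ->
           (restr_eq xi x0 x1 <-> restr_eq xi (H x0) (H x1)))].

From HB Require Import structures.
From mathcomp Require Import all_boot all_order.
From mathcomp Require Import all_classical all_reals all_analysis.
Set Implicit Arguments. Unset Strict Implicit. Unset Printing Implicit Defensive.
Local Open Scope classical_set_scope.

(* Let xi be eta together
   with the proper initial segments of i; both xi and xi + {i} lie in Xi.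
   Take x0, x1 in D^zeta differing only at coordinate i.  They agree on xi, so
   their images under the IPS homeomorphism H agree on xi, hence on eta.  They
   disagree on xi + {i}, so H x0 and H x1 disagree there, which can only happen
   at the coordinate i. *)

Lemma countable_setU T (A B : set T) :
  countable A -> countable B -> countable (A `|` B).
Proof.
move=> cA cB.
have -> : A `|` B = \bigcup_(b in [set: bool]) (if b then A else B).
  apply/seteqP; split => x /=.
  - by case=> h; [exists true | exists false].
  - by case=> [[]] _ h; [left | right].
by apply: bigcup_countable => // -[].
Qed.

Lemma sext_take (j i : seq cord) : sext j i -> j = take (size j) i.
Proof. by case=> k [_ ->]; rewrite take_size_cat. Qed.

Lemma sext_trans (a b c : seq cord) : sext a b -> sext b c -> sext a c.
Proof.
case=> k [k0 ->] [k' [_ ->]]; exists (k ++ k'); split; last by rewrite catA.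
by case: k k0.
Qed.

Lemma sext_irr (a : seq cord) : ~ sext a a.
Proof.
case=> k [k0 /(congr1 size) /eqP]; rewrite size_cat -[X in X == _]addn0.
by rewrite eqn_add2l; case: k k0.
Qed.

Definition preds (i : seq cord) : set (seq cord) := [set j | inT j /\ sext j i].

Lemma countable_preds (i : seq cord) : countable (preds i).
Proof.
apply: (@sub_countable _ _ _ ((fun n => take n i) @` [set: nat])).
  by apply: subset_card_le => j [_ /sext_take ji]; exists (size j).
apply: card_le_trans; first exact: card_image_le.
exact: countableP.
Qed.

Lemma inXi_setU (A B : set (seq cord)) : inXi A -> inXi B -> inXi (A `|` B).
Proof.
case=> AT cA dA [BT cB dB]; split; first by move=> j [/AT|/BT].
- exact: countable_setU.
- by move=> j l jT jl [/(dA _ _ jT jl)|/(dB _ _ jT jl)]; [left|right].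
Qed.

Lemma inXi_preds (i : seq cord) : inXi (preds i).
Proof.
split; first by move=> j [].
- exact: countable_preds.
- by move=> j l jT jl [_ li]; split => //; exact: sext_trans jl li.
Qed.

Lemma inXi_predsU1 (i : seq cord) : inT i -> inXi (preds i `|` [set i]).
Proof.
move=> iT; split; first by move=> j [[]|->].
- exact/countable_setU/countable1/countable_preds.
- move=> j l jT jl [[_ li]|li]; left; split => //; last by rewrite -li.
  exact: sext_trans jl li.
Qed.

Lemma preds_sub (zeta : set (seq cord)) (i : seq cord) :
  inXi zeta -> zeta i -> preds i `<=` zeta.
Proof. by case=> _ _ dz zi j [jT ji]; exact: dz zi. Qed.

Section Restriction.
Variable zeta : set (seq cord).

Lemma restr_eq_sub (A B : set (seq cord)) (x y : Dpow zeta) :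
  A `<=` B -> restr_eq B x y -> restr_eq A x y.
Proof. by move=> AB xy j /AB; exact: xy. Qed.

Lemma restr_eqU1 (A : set (seq cord)) (x y : Dpow zeta) j :
  restr_eq A x y -> x j = y j -> restr_eq (A `|` [set sval j]) x y.
Proof.
move=> xy xyj [k zk] [/xy // | /= kj].
case: j xyj kj => j zj xyj /= kj; subst k.
by rewrite (Prop_irrelevance zk zj).
Qed.

Definition point_flip (j : {j : seq cord | zeta j}) : Dpow zeta :=
  fun k => if pselect (k = j) then cst true else cst false.

Lemma point_flip_neq j : point_flip j j <> cst (cst false) j.
Proof. by rewrite /point_flip; case: pselect => // _ /(congr1 (fun f => f 0%N)). Qed.

Lemma restr_eq_point_flip (A : set (seq cord)) j :
  ~ A (sval j) -> restr_eq A (cst (cst false)) (point_flip j).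
Proof. by move=> Aj k Ak; rewrite /point_flip; case: pselect => // kj; subst. Qed.

End Restriction.

Lemma IPS_separates (zeta : set (seq cord)) (X : set (Dpow zeta)) :
  IPS X -> forall (xi : set (seq cord)) j,
  inXi xi -> inXi (xi `|` [set sval j]) -> xi `<=` zeta -> ~ xi (sval j) ->
  exists x y, [/\ X x, X y, restr_eq xi x y & x j <> y j].
Proof.
case=> H [G [_ HX _ _ Hres]] xi j xiXi xijXi xiz xij.
have xijz : xi `|` [set sval j] `<=` zeta.
  by move=> k [/xiz // | ->]; exact: (svalP j).
pose x0 : Dpow zeta := cst (cst false).
have Hx01 := (Hres _ _ _ xiXi xiz).1 (restr_eq_point_flip xij).
exists (H x0), (H (point_flip j)); split.
- by rewrite -HX; exists x0.
- by rewrite -HX; exists (point_flip j).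
- exact: Hx01.
- move=> /(restr_eqU1 Hx01) /(Hres _ _ _ xijXi xijz).2 /(_ j (or_intror erefl)).
  by move/esym/point_flip_neq.
Qed.

Theorem lemma2p6 (zeta : set (seq cord)) (Hzeta : inXi zeta)
  (X : set (Dpow zeta)) (HX : IPS X)
  (eta : set (seq cord)) (Heta : inXi eta) (Hsub : eta `<=` zeta)
  (i : seq cord) (Hi : zeta i) (Hni : ~ eta i) :
  exists x y : Dpow zeta, [/\ X x, X y, restr_eq eta x y
    & x (exist _ i Hi) <> y (exist _ i Hi)].
Proof.
have iT : inT i by case: Hzeta => zT _ _; exact: zT.
pose xi := eta `|` preds i.
have xiXi : inXi xi by exact/inXi_setU/inXi_preds.
have xiiXi : inXi (xi `|` [set i]).
  by rewrite /xi -setUA; exact/inXi_setU/inXi_predsU1.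
have xiz : xi `<=` zeta by move=> k [/Hsub | /(preds_sub Hzeta Hi)].
have xii : ~ xi i by case=> [//|[_ /sext_irr]].
have [x [y [Xx Xy xy xyi]]] :=
  IPS_separates HX (j := exist _ i Hi) xiXi xiiXi xiz xii.
by exists x, y; split => //; apply: restr_eq_sub xy; exact: subsetUl.
Qed.
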